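(* Let $\vec r:\mathbb{Z}\to\mathbb{R}^2$ be a nondegenerate discrete planar curve with constant first and second centroaffine curvatures which is closed with period $p$. Then $\vec r$ is centrosymmetric if and only if $p$ is even.
   Context: A discrete planar curve is a map $\vec r:\mathbb{Z}\to\mathbb{R}^2$; write $\vec r_k=\vec r(k)$ and $\vec t_k=\vec r_{k+1}-\vec r_k$. $[\vec a,\vec b]$ denotes the $2\times2$ determinant. The curve is nondegenerate if $[\vec t_{k-1},\vec t_k]\ne0$ for all $k$. Its first and second centroaffine curvatures are $\kappa_k=\frac{[\vec t_k,\vec t_{k+1}]}{[\vec t_{k-1},\vec t_k]}$, $\bar\kappa_k=\frac{[\vec t_{k-1},\vec t_{k+1}]}{[\vec t_{k-1},\vec t_k]}$. Closed with period $p$: $\vec r(k+p)=\vec r(k)$ for all $k$, $p$ minimal. The closed curve is centrosymmetric if there is a point $\vec c\in\mathbb{R}^2$ such that the vertex set $\{\vec r_k:k\in\mathbb{Z}\}$ is invariant under the point reflection $\vec x\mapsto 2\vec c-\vec x$. *)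

From Stdlib Require Import Reals Lra Lia ZArith.
Open Scope R_scope.

Definition vec := (R * R)%type.

Definition vsub (a b : vec) : vec := (fst a - fst b, snd a - snd b).

Definition det2 (a b : vec) : R := fst a * snd b - snd a * fst b.

Definition tangent (r : Z -> vec) (k : Z) : vec := vsub (r (k + 1)%Z) (r k).

Definition nondegenerate (r : Z -> vec) : Prop :=
  forall k : Z, det2 (tangent r (k - 1)%Z) (tangent r k) <> 0.

Definition kappa (r : Z -> vec) (k : Z) : R :=
  det2 (tangent r k) (tangent r (k + 1)%Z) / det2 (tangent r (k - 1)%Z) (tangent r k).

Definition kappabar (r : Z -> vec) (k : Z) : R :=
  det2 (tangent r (k - 1)%Z) (tangent r (k + 1)%Z) / det2 (tangent r (k - 1)%Z) (tangent r k).

Definition closed_with_period (r : Z -> vec) (p : Z) : Prop :=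
  (0 < p)%Z /\
  (forall k : Z, r (k + p)%Z = r k) /\
  (forall q : Z, (0 < q < p)%Z -> exists k : Z, r (k + q)%Z <> r k).

Definition centrosymmetric (r : Z -> vec) : Prop :=
  exists c : vec, forall x : vec,
    (exists k : Z, r k = x) <->
    (exists k : Z, r k = (2 * fst c - fst x, 2 * snd c - snd x)).

(* Translating the centre O of the curve to the origin, the vertices
   u k = r k - O satisfy u (k+2) = b u (k+1) - a u k (here 1 - b + a <> 0
   because the curve is closed), so u k = A^k (u 0) for a linear map A with
   characteristic polynomial x^2 - b x + a and A^p = 1.  If p = 2m, the shift
   by m is P + Q A with square the identity; Q <> 0 would give A two distinct
   real eigenvalues, both +-1, making 1 a root.  So the shift is +-1, and
   minimality of p leaves -1, the reflection in O.  If p is odd then det A = a = 1; a point symmetry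
   x |-> 2w - x of the vertex set preserves the areas det2 (u k) (u (k+1)),
   which forces w = 0, and a shift acting as -1 contradicts the odd period. *)

From Stdlib Require Import Reals ZArith Lra Lia.
Open Scope R_scope.

Definition vcomb (al : R) (x : vec) (be : R) (y : vec) : vec :=
  (al * fst x + be * fst y, al * snd x + be * snd y).

Definition vscale (c : R) (x : vec) : vec := (c * fst x, c * snd x).

Lemma vec_ext (x y : vec) : fst x = fst y -> snd x = snd y -> x = y.
Proof. destruct x, y; cbn; intros -> ->; reflexivity. Qed.

Ltac vec_ring := apply vec_ext; unfold vcomb, vscale, vsub; cbn [fst snd]; ring.

Ltac vec_components H :=
  let H1 := fresh H "_fst" in
  let H2 := fresh H "_snd" in
  pose proof (f_equal fst H) as H1; pose proof (f_equal snd H) as H2;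
  unfold vcomb, vscale, vsub in H1, H2; cbn [fst snd] in H1, H2.

Lemma det2_decompose (x y z : vec) : det2 x y <> 0 ->
  z = vcomb (det2 z y / det2 x y) x (det2 x z / det2 x y) y.
Proof.
  destruct x, y, z; unfold det2, vcomb; cbn; intros.
  apply vec_ext; cbn; field; assumption.
Qed.

Lemma vcomb_indep (x y : vec) (al be : R) : det2 x y <> 0 ->
  vcomb al x be y = (0, 0) -> al = 0 /\ be = 0.
Proof.
  intros Hxy H.
  assert (Hal : det2 (vcomb al x be y) y = al * det2 x y)
    by (unfold det2, vcomb; cbn; ring).
  assert (Hbe : det2 x (vcomb al x be y) = be * det2 x y)
    by (unfold det2, vcomb; cbn; ring).
  rewrite H in Hal, Hbe. unfold det2 in Hal at 1, Hbe at 1. cbn in Hal, Hbe.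
  split; [apply (Rmult_eq_reg_r (det2 x y)) | apply (Rmult_eq_reg_r (det2 x y))]; lra.
Qed.

Lemma det2_basis_zero (x y w : vec) : det2 x y <> 0 ->
  det2 w x = 0 -> det2 w y = 0 -> w = (0, 0).
Proof.
  intros Hxy Hx Hy. rewrite (det2_decompose x y w Hxy).
  replace (det2 x w) with (- det2 w x) by (unfold det2; ring).
  rewrite Hx, Hy. unfold Rdiv. vec_ring.
Qed.

Definition periodic {A : Type} (f : Z -> A) (p : Z) : Prop :=
  forall k, f (k + p)%Z = f k.

Section Periodic.
Variables (A : Type) (f : Z -> A).

Lemma periodic_add p q : periodic f p -> periodic f q -> periodic f (p + q).
Proof. intros Hp Hq k. rewrite Z.add_assoc, Hq, Hp. reflexivity. Qed.

Lemma periodic_opp p : periodic f p -> periodic f (- p).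
Proof. intros Hp k. rewrite <- (Hp (k + - p)%Z). f_equal; ring. Qed.

Lemma periodic_mul p n : periodic f p -> periodic f (p * n).
Proof.
  intros Hp. induction n as [|n IH|n IH] using Z.peano_ind.
  - intro k. rewrite Z.mul_0_r, Z.add_0_r. reflexivity.
  - rewrite Z.mul_succ_r. exact (periodic_add _ _ IH Hp).
  - rewrite Z.mul_pred_r. exact (periodic_add _ _ IH (periodic_opp _ Hp)).
Qed.

Lemma periodic_combination p q m n :
  periodic f p -> periodic f q -> periodic f (p * m + q * n).
Proof. intros Hp Hq. apply periodic_add; apply periodic_mul; assumption. Qed.

Lemma periodic_1_const : periodic f 1 -> forall k, f k = f 0%Z.
Proof.
  intros H k. rewrite <- (periodic_mul 1 k H 0%Z). f_equal; ring.
Qed.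

End Periodic.

Lemma periodic_drift (f : Z -> R) (c : R) (p : Z) :
  (forall k, f (k + 1)%Z = f k + c) -> periodic f p -> p <> 0%Z -> c = 0.
Proof.
  intros Hstep Hper Hp.
  assert (Hlin : forall k, f k - IZR k * c = f 0%Z - IZR 0 * c).
  { apply (periodic_1_const _ (fun k => f k - IZR k * c)).
    intro k. rewrite Hstep, plus_IZR. ring. }
  pose proof (Hlin p) as H.
  replace (f p) with (f 0%Z) in H by (rewrite <- (Hper 0%Z); f_equal; ring).
  apply (Rmult_eq_reg_l (IZR p)); [lra | apply not_0_IZR; exact Hp].
Qed.

Lemma periodic_geometric (f : Z -> R) (l : R) (p : Z) :
  (forall k, f (k + 1)%Z = l * f k) -> periodic f p -> (0 < p)%Z ->
  f 0%Z = 0 \/ l = 1 \/ l = -1.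
Proof.
  intros Hstep Hper Hp.
  assert (Hpow : forall n : nat, f (Z.of_nat n) = l ^ n * f 0%Z).
  { induction n as [|n IH]; [cbn; ring|].
    rewrite Nat2Z.inj_succ, <- Z.add_1_r, Hstep, IH. cbn; ring. }
  pose proof (Hpow (Z.to_nat p)) as H.
  rewrite Z2Nat.id in H by lia.
  replace (f p) with (f 0%Z) in H by (rewrite <- (Hper 0%Z); f_equal; ring).
  destruct (Req_dec (f 0%Z) 0) as [H0|H0]; [now left|right].
  assert (Hl : l ^ Z.to_nat p = 1).
  { apply (Rmult_eq_reg_r (f 0%Z)); [lra | exact H0]. }
  destruct (pow_R1 l _ Hl) as [Habs|Hn]; [|lia].
  unfold Rabs in Habs. destruct (Rcase_abs l); lra.
Qed.

(* With p = 2m + 1, the periods p and 2j combine to the period j = p j - 2 j m. *)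
Lemma antiperiodic_odd_period (f : Z -> R) (j p : Z) :
  (forall k, f (k + j)%Z = - f k) -> periodic f p -> Z.Odd p -> forall k, f k = 0.
Proof.
  intros Hanti Hper [m Hm] k.
  assert (H2j : periodic f (j + j)).
  { intro i. rewrite Z.add_assoc, Hanti, Hanti. ring. }
  assert (Hj : periodic f (p * j + (j + j) * - m)) by now apply periodic_combination.
  replace (p * j + (j + j) * - m)%Z with j in Hj by (subst p; ring).
  pose proof (Hanti k) as H. rewrite Hj in H. lra.
Qed.

Definition lin_rec (a b : R) (x : Z -> vec) : Prop :=
  forall k, x (k + 2)%Z = vcomb b (x (k + 1)%Z) (- a) (x k).

Section LinearRecurrence.
Variables (a b : R).

Lemma lin_rec_shift (x : Z -> vec) (m : Z) :
  lin_rec a b x -> lin_rec a b (fun k => x (m + k)%Z).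
Proof.
  intros Hx k. rewrite !Z.add_assoc. apply Hx.
Qed.

Lemma det2_lin_rec_step (x : Z -> vec) : lin_rec a b x ->
  forall k, det2 (x (k + 1)%Z) (x (k + 2)%Z) = a * det2 (x k) (x (k + 1)%Z).
Proof. intros Hx k. rewrite Hx. unfold det2, vcomb; cbn; ring. Qed.

Hypothesis Ha : a <> 0.

Lemma lin_rec_back (x : Z -> vec) (k : Z) : lin_rec a b x ->
  x k = vcomb (b / a) (x (k + 1)%Z) (- / a) (x (k + 2)%Z).
Proof.
  intros Hx. rewrite Hx. apply vec_ext; unfold vcomb; cbn; field; exact Ha.
Qed.

Lemma lin_rec_unique (x y : Z -> vec) : lin_rec a b x -> lin_rec a b y ->
  x 0%Z = y 0%Z -> x 1%Z = y 1%Z -> forall k, x k = y k.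
Proof.
  intros Hx Hy H0 H1.
  enough (Hpair : forall k, x k = y k /\ x (k + 1)%Z = y (k + 1)%Z)
    by (intro k; apply Hpair).
  intro k. induction k as [|k [IH0 IH1]|k [IH0 IH1]] using Z.peano_ind.
  - split; assumption.
  - rewrite <- Z.add_1_r, <- Z.add_assoc. split; [exact IH1|].
    rewrite Hx, Hy, IH0, IH1. reflexivity.
  - replace (Z.pred k + 1)%Z with k by lia. split; [|exact IH0].
    rewrite (lin_rec_back x), (lin_rec_back y) by assumption.
    replace (Z.pred k + 1)%Z with k by lia.
    replace (Z.pred k + 2)%Z with (k + 1)%Z by lia.
    rewrite IH0, IH1. reflexivity.
Qed.

Variable u : Z -> vec.
Hypotheses (Hu : lin_rec a b u) (He : det2 (u 0%Z) (u 1%Z) <> 0).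

(* orbit x k = A^k x, where A is the linear map with A (u k) = u (k + 1):
   the coordinates of x in the basis (u 0, u 1) transported along u. *)
Definition orbit (x : vec) (k : Z) : vec :=
  vcomb (det2 x (u 1%Z) / det2 (u 0%Z) (u 1%Z)) (u k)
        (det2 (u 0%Z) x / det2 (u 0%Z) (u 1%Z)) (u (k + 1)%Z).

Lemma orbit_vcomb (al be : R) (x y : vec) (k : Z) :
  orbit (vcomb al x be y) k = vcomb al (orbit x k) be (orbit y k).
Proof. unfold orbit, det2, Rdiv. vec_ring. Qed.

Lemma orbit_seq (j k : Z) : orbit (u j) k = u (k + j)%Z.
Proof.
  revert j.
  apply (lin_rec_unique (fun j => orbit (u j) k) (fun j => u (k + j)%Z)).
  - intro j. cbv beta. rewrite Hu, orbit_vcomb. reflexivity.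
  - exact (lin_rec_shift u k Hu).
  - unfold orbit. rewrite Z.add_0_r.
    apply vec_ext; unfold det2, vcomb; cbn; field; exact He.
  - unfold orbit.
    apply vec_ext; unfold det2, vcomb; cbn; field; exact He.
Qed.

Lemma orbit_det2 (x y : vec) : det2 (orbit x 1) (orbit y 1) = a * det2 x y.
Proof.
  unfold orbit. change (1 + 1)%Z with (0 + 2)%Z. rewrite (Hu 0%Z).
  revert He. unfold det2, vcomb; cbn. intro. field. exact He.
Qed.

Variable p : Z.
Hypotheses (Hp : (0 < p)%Z) (Hper : periodic u p).

(* u (k+1) - (b - l) u k is periodic and geometric of ratio l. *)
Lemma periodic_char_root (l : R) : l * l - b * l + a = 0 -> l = 1 \/ l = -1.
Proof.
  intros Hroot.
  set (v k := vcomb 1 (u (k + 1)%Z) (- (b - l)) (u k)).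
  assert (Hv : forall k, v (k + 1)%Z = vscale l (v k)).
  { intro k. unfold v. rewrite <- Z.add_assoc. change (1 + 1)%Z with 2%Z.
    rewrite Hu. replace a with (l * (b - l)) by lra. vec_ring. }
  assert (Hvper : periodic v p).
  { intro k. unfold v. replace (k + p + 1)%Z with (k + 1 + p)%Z by ring.
    rewrite !Hper. reflexivity. }
  destruct (periodic_geometric (fun k => fst (v k)) l p) as [H1|H1];
    [intro k; rewrite Hv; reflexivity | intro k; cbv beta; rewrite Hvper; reflexivity
    | exact Hp | | exact H1].
  destruct (periodic_geometric (fun k => snd (v k)) l p) as [H2|H2];
    [intro k; rewrite Hv; reflexivity | intro k; cbv beta; rewrite Hvper; reflexivity
    | exact Hp | | exact H2].
  exfalso. apply He. unfold v, vcomb in H1, H2. cbn in H1, H2.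
  unfold det2.
  replace (fst (u 1%Z)) with ((b - l) * fst (u 0%Z)) by lra.
  replace (snd (u 1%Z)) with ((b - l) * snd (u 0%Z)) by lra. ring.
Qed.

Hypothesis Hab : 1 - b + a <> 0.

(* Both roots would be +-1 and distinct, so one of them would be 1. *)
Lemma no_distinct_real_char_roots : ~ 0 < b * b - 4 * a.
Proof.
  intros Hdisc.
  set (s := sqrt (b * b - 4 * a)).
  assert (Hs : s * s = b * b - 4 * a) by (apply sqrt_sqrt; lra).
  assert (Hs0 : 0 < s) by (apply sqrt_lt_R0; lra).
  destruct (periodic_char_root ((b + s) / 2)) as [Hl|Hl]; [nra|..];
  destruct (periodic_char_root ((b - s) / 2)) as [Hm|Hm]; try nra.
Qed.

(* The shift by m acts as P + Q A; it squares to the identity, and Q <> 0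
   would give (b^2 - 4a) Q^2 = 4. *)
Lemma half_period_shift (m : Z) : p = (2 * m)%Z ->
  periodic u m \/ (forall k, u (k + m)%Z = vscale (-1) (u k)).
Proof.
  intros Hm.
  set (P := det2 (u m) (u 1%Z) / det2 (u 0%Z) (u 1%Z)).
  set (Q := det2 (u 0%Z) (u m) / det2 (u 0%Z) (u 1%Z)).
  assert (Hshift : forall k, u (k + m)%Z = vcomb P (u k) Q (u (k + 1)%Z))
    by (intro k; rewrite <- orbit_seq; reflexivity).
  assert (HPQ : P * P - a * Q * Q - 1 = 0 /\ 2 * P * Q + b * Q * Q = 0).
  { apply (vcomb_indep (u 0%Z) (u 1%Z)); [exact He|].
    assert (Hm0 : u m = vcomb P (u 0%Z) Q (u 1%Z)) by exact (Hshift 0%Z).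
    assert (Hm1 : u (m + 1)%Z = vcomb P (u 1%Z) Q (u (0 + 2)%Z))
      by (rewrite Z.add_comm; exact (Hshift 1%Z)).
    pose proof (Hshift m) as H.
    rewrite Hm1, Hm0, Hu in H.
    replace (m + m)%Z with (0 + p)%Z in H by lia.
    rewrite Hper in H. change (0 + 1)%Z with 1%Z in H.
    vec_components H. apply vec_ext; cbn; lra. }
  destruct HPQ as [HPQ1 HPQ2].
  destruct (Req_dec Q 0) as [HQ|HQ].
  - assert (HP : (P - 1) * (P + 1) = 0) by (rewrite HQ in HPQ1; lra).
    destruct (Rmult_integral _ _ HP) as [HP1|HP1]; [left|right]; intro k;
      rewrite Hshift, HQ; [replace P with 1 by lra | replace P with (-1) by lra];
      vec_ring.
  - exfalso. apply no_distinct_real_char_roots.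
    assert (H2 : 2 * P + b * Q = 0) by (apply (Rmult_eq_reg_l Q); [lra | exact HQ]).
    assert (Hdisc : (b * b - 4 * a) * (Q * Q) = 4) by nra.
    assert (HQ2 : 0 < Q * Q) by nra.
    nra.
Qed.

Lemma odd_period_unimodular : Z.Odd p -> a = 1.
Proof.
  intros Hodd.
  set (E k := det2 (u k) (u (k + 1)%Z)).
  assert (HE : forall k, E (k + 1)%Z = a * E k).
  { intro k. unfold E. rewrite <- Z.add_assoc. exact (det2_lin_rec_step u Hu k). }
  assert (HEper : periodic E p).
  { intro k. unfold E. replace (k + p + 1)%Z with (k + 1 + p)%Z by ring.
    rewrite !Hper. reflexivity. }
  destruct (periodic_geometric E a p HE HEper Hp) as [H0|[H1|Hm1]];
    [exfalso; exact (He H0) | exact H1 |].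
  exfalso. apply He, (antiperiodic_odd_period E 1 p); [|exact HEper|exact Hodd].
  intro k. rewrite HE, Hm1. ring.
Qed.

(* Since a = 1, the reflection x |-> 2w - x carries consecutive vertices to
   consecutive vertices of equal area; this yields g (k+2) = g k + c for
   g k = det2 w (u k), and the odd period forces c = 0, g constant, g = 0. *)
Lemma odd_period_symmetry_center (w : vec) : Z.Odd p ->
  (forall k, exists j, u j = vcomb 2 w (-1) (u k)) -> w = (0, 0).
Proof.
  intros Hodd Hsym.
  pose proof odd_period_unimodular Hodd as Ha1.
  set (g k := det2 w (u k)).
  set (c := 2 * det2 w (orbit w 1)).
  assert (Hdet : forall k, det2 (u k) (u (k + 1)%Z) = det2 (u 0%Z) (u 1%Z)).
  { apply (periodic_1_const _ (fun k => det2 (u k) (u (k + 1)%Z))). intro k.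
    cbv beta. rewrite <- Z.add_assoc. change (1 + 1)%Z with 2%Z.
    rewrite (det2_lin_rec_step u Hu k), Ha1. ring. }
  assert (Hg2 : forall k, g (k + 2)%Z = g k + c).
  { intro k. destruct (Hsym (k + 1)%Z) as [j Hj].
    assert (Hj1 : u (j + 1)%Z = vcomb 2 (orbit w 1) (-1) (u (k + 2)%Z)).
    { rewrite (Z.add_comm j 1), <- (orbit_seq j 1), Hj, orbit_vcomb, orbit_seq.
      replace (1 + (k + 1))%Z with (k + 2)%Z by ring. reflexivity. }
    assert (Hback : det2 (u (k + 1)%Z) (orbit w 1) = - g k).
    { rewrite (Z.add_comm k 1), <- (orbit_seq k 1), orbit_det2, Ha1.
      unfold g, det2. ring. }
    pose proof (Hdet j) as Hdj.
    rewrite Hj1, Hj, <- (Hdet (k + 1)%Z) in Hdj.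
    replace (k + 1 + 1)%Z with (k + 2)%Z in Hdj by ring.
    unfold g, c in *. unfold det2, vcomb in *. cbn in *. lra. }
  assert (Hgper : periodic g p) by (intro k; unfold g; rewrite Hper; reflexivity).
  assert (Hc : c = 0).
  { apply (periodic_drift (fun n => g (2 * n)%Z) c p).
    - intro n. replace (2 * (n + 1))%Z with (2 * n + 2)%Z by ring. apply Hg2.
    - intro n. cbv beta. replace (2 * (n + p))%Z with (2 * n + p * 2)%Z by ring.
      apply periodic_mul, Hgper.
    - lia. }
  assert (Hg1 : periodic g 1).
  { destruct Hodd as [m Hm].
    assert (H2 : periodic g 2) by (intro k; rewrite Hg2, Hc; ring).
    replace 1%Z with (p * 1 + 2 * - m)%Z by lia.
    apply periodic_combination; assumption. }
  assert (Hg0 : g 0%Z = 0).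
  { assert (H : g (0 + 2)%Z = b * g (0 + 1)%Z - a * g 0%Z)
      by (unfold g; rewrite Hu; unfold det2, vcomb; cbn; ring).
    rewrite (periodic_1_const _ g Hg1 (0 + 2)%Z),
      (periodic_1_const _ g Hg1 (0 + 1)%Z) in H.
    apply (Rmult_eq_reg_l (1 - b + a)); [lra | exact Hab]. }
  apply (det2_basis_zero (u 0%Z) (u 1%Z) w He); [exact Hg0|].
  rewrite <- Hg0. exact (periodic_1_const _ g Hg1 1%Z).
Qed.

Lemma odd_period_not_point_symmetric : Z.Odd p ->
  ~ exists w, forall k, exists j, u j = vcomb 2 w (-1) (u k).
Proof.
  intros Hodd [w Hsym].
  pose proof (odd_period_symmetry_center w Hodd Hsym) as Hw. subst w.
  destruct (Hsym 0%Z) as [j Hj].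
  assert (Hanti : forall k, u (k + j)%Z = vscale (-1) (u k)).
  { intro k. rewrite <- orbit_seq, Hj, orbit_vcomb, orbit_seq, Z.add_0_r.
    unfold orbit, det2, Rdiv. vec_ring. }
  assert (H1 : fst (u 0%Z) = 0).
  { apply (antiperiodic_odd_period (fun k => fst (u k)) j p); [| |exact Hodd];
      intro k; cbv beta; [rewrite Hanti; cbn; ring | rewrite Hper; reflexivity]. }
  assert (H2 : snd (u 0%Z) = 0).
  { apply (antiperiodic_odd_period (fun k => snd (u k)) j p); [| |exact Hodd];
      intro k; cbv beta; [rewrite Hanti; cbn; ring | rewrite Hper; reflexivity]. }
  apply He. unfold det2. rewrite H1, H2. ring.
Qed.

End LinearRecurrence.

Definition centered (r : Z -> vec) (O : vec) (k : Z) : vec := vsub (r k) O.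

Lemma kappa_neq0 (r : Z -> vec) (k : Z) : nondegenerate r -> kappa r k <> 0.
Proof.
  intros Hnd. unfold kappa. pose proof (Hnd (k + 1)%Z) as H1.
  replace (k + 1 - 1)%Z with k in H1 by ring.
  apply Rmult_integral_contrapositive_currified;
    [exact H1 | apply Rinv_neq_0_compat, Hnd].
Qed.

Lemma tangent_lin_rec (r : Z -> vec) (a b : R) : nondegenerate r ->
  (forall k, kappa r k = a) -> (forall k, kappabar r k = b) -> lin_rec a b (tangent r).
Proof.
  intros Hnd Ha Hb k.
  pose proof (Hnd (k + 1)%Z) as HD.
  pose proof (Ha (k + 1)%Z) as HA. pose proof (Hb (k + 1)%Z) as HB.
  unfold kappa, kappabar in HA, HB.
  replace (k + 1 - 1)%Z with k in HD, HA, HB by ring.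
  replace (k + 1 + 1)%Z with (k + 2)%Z in HA, HB by ring.
  set (t := tangent r) in *.
  rewrite (det2_decompose (t k) (t (k + 1)%Z) (t (k + 2)%Z) HD), HB.
  replace (det2 (t (k + 2)%Z) (t (k + 1)%Z) / det2 (t k) (t (k + 1)%Z)) with (- a)
    by (rewrite <- HA; unfold det2; field; exact HD).
  vec_ring.
Qed.

(* If 1 were a characteristic root, r (k+1) - a r k would drift by the constant
   vector t 1 - a t 0 at each step, which periodicity forces to vanish. *)
Lemma one_not_char_root (r : Z -> vec) (a b : R) (p : Z) : nondegenerate r ->
  lin_rec a b (tangent r) -> periodic r p -> p <> 0%Z -> 1 - b + a <> 0.
Proof.
  intros Hnd Ht Hper Hp Hab.
  set (t := tangent r) in *.
  set (G k := vcomb 1 (r (k + 1)%Z) (- a) (r k)).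
  set (c := vcomb 1 (t 1%Z) (- a) (t 0%Z)).
  assert (Hc : forall k, vcomb 1 (t (k + 1)%Z) (- a) (t k) = c).
  { apply (periodic_1_const _ (fun k => vcomb 1 (t (k + 1)%Z) (- a) (t k))).
    intro k. cbv beta. rewrite <- Z.add_assoc. change (1 + 1)%Z with 2%Z.
    rewrite Ht. replace b with (1 + a) by lra. vec_ring. }
  assert (HG : forall k, G (k + 1)%Z = vcomb 1 (G k) 1 c).
  { intro k. rewrite <- (Hc k). unfold G, t, tangent.
    rewrite <- Z.add_assoc. vec_ring. }
  assert (HGper : periodic G p).
  { intro k. unfold G. replace (k + p + 1)%Z with (k + 1 + p)%Z by ring.
    rewrite !Hper. reflexivity. }
  assert (H1 : fst c = 0).
  { apply (periodic_drift (fun k => fst (G k)) (fst c) p); [| |exact Hp];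
      intro k; cbv beta; [rewrite HG; unfold vcomb; cbn; ring | rewrite HGper; reflexivity]. }
  assert (H2 : snd c = 0).
  { apply (periodic_drift (fun k => snd (G k)) (snd c) p); [| |exact Hp];
      intro k; cbv beta; [rewrite HG; unfold vcomb; cbn; ring | rewrite HGper; reflexivity]. }
  apply (Hnd 1%Z). change (1 - 1)%Z with 0%Z. fold t.
  unfold c, vcomb in H1, H2. cbn [fst snd] in H1, H2. unfold det2.
  replace (fst (t 1%Z)) with (a * fst (t 0%Z)) by lra.
  replace (snd (t 1%Z)) with (a * snd (t 0%Z)) by lra. ring.
Qed.

(* The defect r (k+2) - b r (k+1) + a r k is constant; the centre O is the
   point whose own defect (1 - b + a) O equals it. *)
Lemma lin_rec_center (r : Z -> vec) (a b : R) :
  lin_rec a b (tangent r) -> 1 - b + a <> 0 -> exists O, lin_rec a b (centered r O).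
Proof.
  intros Ht Hab.
  set (D k := vsub (r (k + 2)%Z) (vcomb b (r (k + 1)%Z) (- a) (r k))).
  assert (HD : forall k, D k = D 0%Z).
  { apply periodic_1_const. intro k. pose proof (Ht k) as H.
    unfold D, tangent in *. vec_components H.
    replace (k + 1 + 2)%Z with (k + 2 + 1)%Z by ring.
    replace (k + 1 + 1)%Z with (k + 2)%Z in * by ring.
    apply vec_ext; cbn; lra. }
  exists (vscale (/ (1 - b + a)) (D 0%Z)). intro k.
  pose proof (HD k) as H. unfold D at 1 in H. vec_components H.
  unfold centered. apply vec_ext; unfold vcomb, vscale, vsub; cbn [fst snd];
    [rewrite <- H_fst | rewrite <- H_snd]; field; exact Hab.
Qed.

Lemma centered_det2_neq0 (r : Z -> vec) (a b : R) (O : vec) : nondegenerate r ->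
  lin_rec a b (centered r O) -> det2 (centered r O 0%Z) (centered r O 1%Z) <> 0.
Proof.
  intros Hnd Hu H0. apply (Hnd 1%Z). change (1 - 1)%Z with 0%Z.
  assert (Ht : forall k, tangent r k = vsub (centered r O (k + 1)%Z) (centered r O k))
    by (intro k; unfold centered, tangent; vec_ring).
  rewrite !Ht. change (1 + 1)%Z with (0 + 2)%Z. rewrite Hu.
  transitivity ((1 - b + a) * det2 (centered r O 0%Z) (centered r O 1%Z));
    [unfold det2, vsub, vcomb; cbn; ring | rewrite H0; ring].
Qed.

Lemma centrosymmetric_centered (r : Z -> vec) (O : vec) : centrosymmetric r ->
  exists w, forall k, exists j, centered r O j = vcomb 2 w (-1) (centered r O k).
Proof.
  intros [c Hc]. exists (vsub c O). intro k.
  destruct (proj1 (Hc (r k)) (ex_intro _ k eq_refl)) as [j Hj].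
  exists j. unfold centered. rewrite Hj. vec_ring.
Qed.

Lemma centrosymmetric_of_antipodal_shift (r : Z -> vec) (O : vec) (m : Z) :
  (forall k, centered r O (k + m)%Z = vscale (-1) (centered r O k)) -> centrosymmetric r.
Proof.
  intros Hm. exists O.
  assert (Hr : forall k, r (k + m)%Z = (2 * fst O - fst (r k), 2 * snd O - snd (r k))).
  { intro k. specialize (Hm k). unfold centered in Hm. vec_components Hm.
    apply vec_ext; cbn; lra. }
  intro x. split; intros [k Hk]; exists (k + m)%Z; rewrite Hr, Hk; [reflexivity|].
  apply vec_ext; cbn; ring.
Qed.

Theorem corollary3p14 (r : Z -> vec) (p : Z) :
  nondegenerate r ->
  (exists a : R, forall k : Z, kappa r k = a) ->
  (exists b : R, forall k : Z, kappabar r k = b) ->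
  closed_with_period r p ->
  (centrosymmetric r <-> Z.Even p).
Proof.
  intros Hnd [a Ha] [b Hb] [Hp [Hper Hmin]].
  pose proof (tangent_lin_rec r a b Hnd Ha Hb) as Ht.
  assert (Ha0 : a <> 0) by (rewrite <- (Ha 0%Z); exact (kappa_neq0 r 0 Hnd)).
  assert (Hab : 1 - b + a <> 0) by (apply (one_not_char_root r a b p Hnd Ht Hper); lia).
  destruct (lin_rec_center r a b Ht Hab) as [O Hu].
  pose proof (centered_det2_neq0 r a b O Hnd Hu) as He.
  assert (Hper_u : periodic (centered r O) p)
    by (intro k; unfold centered; rewrite Hper; reflexivity).
  split.
  - intros Hcs. destruct (Z.Even_or_Odd p) as [Hev|Hodd]; [exact Hev|exfalso].
    exact (odd_period_not_point_symmetric a b Ha0 (centered r O) Hu He p Hp Hper_u Hab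
             Hodd (centrosymmetric_centered r O Hcs)).
  - intros [m Hm].
    destruct (half_period_shift a b Ha0 (centered r O) Hu He p Hp Hper_u Hab m Hm)
      as [Hshift|Hanti].
    + exfalso. destruct (Hmin m) as [k Hk]; [lia|]. apply Hk.
      specialize (Hshift k). unfold centered in Hshift. vec_components Hshift.
      apply vec_ext; lra.
    + exact (centrosymmetric_of_antipodal_shift r O m Hanti).
Qed.
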